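(* Let $\tau$ be a nowhere vanishing function of $(s,r,\boldsymbol t,\bar{\boldsymbol t})$ with associated wave functions as in the context. The six difference Fay identities (1a),(1b),(2a),(2b),(3a),(3b) listed in the context are equivalent to the system of the following four equations holding for each of the four pairs $(\Phi_1,\Phi_2)=(\Psi_1,\Psi_2),(\Psi^*_1,\Psi^*_2),(\bar\Psi_1,\bar\Psi_2),(\bar\Psi^*_1,\bar\Psi^*_2)$ (functions of $(s,r,\boldsymbol t,\bar{\boldsymbol t},\mu)$; only shifted arguments are displayed, others equal $(\boldsymbol t,\bar{\boldsymbol t})$): $$\Phi_1(s,r,\boldsymbol t-[\lambda^{-1}])+\lambda^{-1}\Phi_1(s+1,r)-\frac{\tau(s+1,r,\boldsymbol t-[\lambda^{-1}])\tau(s,r)}{\tau(s+1,r)\tau(s,r,\boldsymbol t-[\lambda^{-1}])}\Phi_1(s,r)-\lambda^{-1}\frac{\tau(s+1,r,\boldsymbol t-[\lambda^{-1}])\tau(s+1,r+1)}{\tau(s+1,r)\tau(s,r,\boldsymbol t-[\lambda^{-1}])}\Phi_2(s+1,r,\boldsymbol t-[\lambda^{-1}])=0,$$ $$\Phi_2(s,r,\boldsymbol t+[\lambda^{-1}])+\lambda^{-1}\Phi_2(s-1,r)-\frac{\tau(s-1,r,\boldsymbol t+[\lambda^{-1}])\tau(s,r)}{\tau(s-1,r)\tau(s,r,\boldsymbol t+[\lambda^{-1}])}\Phi_2(s,r)-\lambda^{-1}\frac{\tau(s-1,r,\boldsymbol t+[\lambda^{-1}])\tau(s-1,r-1)}{\tau(s-1,r)\tau(s,r,\boldsymbol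 t+[\lambda^{-1}])}\Phi_1(s-1,r,\boldsymbol t+[\lambda^{-1}])=0,$$ $$\Phi_1(s,r,\bar{\boldsymbol t}-[\lambda])-\Phi_1(s,r)+\lambda\frac{\tau(s+1,r,\bar{\boldsymbol t}-[\lambda])\tau(s-1,r)}{\tau(s,r)\tau(s,r,\bar{\boldsymbol t}-[\lambda])}\Phi_1(s-1,r)-\lambda\frac{\tau(s+1,r,\bar{\boldsymbol t}-[\lambda])\tau(s,r+1)}{\tau(s,r)\tau(s,r,\bar{\boldsymbol t}-[\lambda])}\Phi_2(s+1,r,\bar{\boldsymbol t}-[\lambda])=0,$$ $$\Phi_2(s,r,\bar{\boldsymbol t}+[\lambda])-\Phi_2(s,r)+\lambda\frac{\tau(s-1,r,\bar{\boldsymbol t}+[\lambda])\tau(s+1,r)}{\tau(s,r)\tau(s,r,\bar{\boldsymbol t}+[\lambda])}\Phi_2(s+1,r)-\lambda\frac{\tau(s-1,r,\bar{\boldsymbol t}+[\lambda])\tau(s,r-1)}{\tau(s,r)\tau(s,r,\bar{\boldsymbol t}+[\lambda])}\Phi_1(s-1,r,\bar{\boldsymbol t}+[\lambda])=0.$$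
   Context: $\boldsymbol t=(t_1,t_2,\dots)$, $\bar{\boldsymbol t}=(\bar t_1,\bar t_2,\dots)$, $s,r\in\mathbb Z$, $[z]=(z,z^2/2,z^3/3,\dots)$, $\xi(\boldsymbol t,z)=\sum_{k\ge1}t_kz^k$; $\tau(s,r)=\tau(s,r,\boldsymbol t,\bar{\boldsymbol t})$, and $\tau(s,r,\boldsymbol a,\bar{\boldsymbol a})$ in the Fay identities below means $\tau(s,r,\boldsymbol t+\boldsymbol a,\bar{\boldsymbol t}+\bar{\boldsymbol a})$. Wave functions: $\Psi_1=z^{s+r}e^{\xi(\boldsymbol t,z)}\frac{\tau(s,r,\boldsymbol t-[z^{-1}],\bar{\boldsymbol t})}{\tau(s,r)}$, $\Psi_2=z^{s+r-2}e^{\xi(\boldsymbol t,z)}\frac{\tau(s-1,r-1,\boldsymbol t-[z^{-1}],\bar{\boldsymbol t})}{\tau(s,r)}$, $\Psi^*_1=z^{-s-r-2}e^{-\xi(\boldsymbol t,z)}\frac{\tau(s+1,r+1,\boldsymbol t+[z^{-1}],\bar{\boldsymbol t})}{\tau(s,r)}$, $\Psi^*_2=z^{-s-r}e^{-\xi(\boldsymbol t,z)}\frac{\tau(s,r,\boldsymbol t+[z^{-1}],\bar{\boldsymbol t})}{\tau(s,r)}$, $\bar\Psi_1=z^{s-r}e^{\xi(\bar{\boldsymbol t},z^{-1})}\frac{\tau(s+1,r,\boldsymbol t,\bar{\boldsymbol t}-[z])}{\tau(s,r)}$, $\bar\Psi_2=z^{s-r}e^{\xi(\bar{\boldsymbol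 t},z^{-1})}\frac{\tau(s,r-1,\boldsymbol t,\bar{\boldsymbol t}-[z])}{\tau(s,r)}$, $\bar\Psi^*_1=z^{-s+r}e^{-\xi(\bar{\boldsymbol t},z^{-1})}\frac{\tau(s,r+1,\boldsymbol t,\bar{\boldsymbol t}+[z])}{\tau(s,r)}$, $\bar\Psi^*_2=z^{-s+r}e^{-\xi(\bar{\boldsymbol t},z^{-1})}\frac{\tau(s-1,r,\boldsymbol t,\bar{\boldsymbol t}+[z])}{\tau(s,r)}$ (here with $z=\mu$). Difference Fay identities (for all $s,r,\boldsymbol t,\bar{\boldsymbol t}$ and parameters $\lambda\ne\mu$): (1a) $-\frac{\mu}{\lambda-\mu}\tau(s+1,r,[\mu^{-1}],0)\tau(s+1,r+1,[\lambda^{-1}],0)-\frac{\lambda}{\mu-\lambda}\tau(s+1,r,[\lambda^{-1}],0)\tau(s+1,r+1,[\mu^{-1}],0)+\frac1{\lambda\mu}\tau(s+2,r+1,[\lambda^{-1}]+[\mu^{-1}],0)\tau(s,r)=\tau(s+1,r+1,[\lambda^{-1}]+[\mu^{-1}],0)\tau(s+1,r)$; (1b) $-\frac{\mu}{\lambda-\mu}\tau(s,r+1,[\mu^{-1}],0)\tau(s+1,r+1,[\lambda^{-1}],0)-\frac{\lambda}{\mu-\lambda}\tau(s,r+1,[\lambda^{-1}],0)\tau(s+1,r+1,[\mu^{-1}],0)+\frac1{\lambda\mu}\tau(s+1,r+2,[\lambda^{-1}]+[\mu^{-1}],0)\tau(s,r)=\tau(s+1,r+1,[\lambda^{-1}]+[\mu^{-1}],0)\tau(s,r+1)$;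 (2a) $\tau(s,r+1,0,[\lambda]+[\mu])\tau(s,r)=\frac{\lambda}{\lambda-\mu}\tau(s,r,0,[\mu])\tau(s,r+1,0,[\lambda])+\frac{\mu}{\mu-\lambda}\tau(s,r,0,[\lambda])\tau(s,r+1,0,[\mu])+\lambda\mu\,\tau(s-1,r+1,0,[\lambda]+[\mu])\tau(s+1,r)$; (2b) $\tau(s,r+1,0,[\lambda]+[\mu])\tau(s+1,r+1)=\frac{\lambda}{\lambda-\mu}\tau(s+1,r+1,0,[\mu])\tau(s,r+1,0,[\lambda])+\frac{\mu}{\mu-\lambda}\tau(s+1,r+1,0,[\lambda])\tau(s,r+1,0,[\mu])+\lambda\mu\,\tau(s,r+2,0,[\lambda]+[\mu])\tau(s+1,r)$; (3a) $\lambda^{-1}\tau(s,r,0,[\mu])\tau(s+1,r+1,[\lambda^{-1}],0)-\lambda^{-1}\tau(s+1,r+1,[\lambda^{-1}],[\mu])\tau(s,r)=\mu\,\tau(s+1,r,[\lambda^{-1}],0)\tau(s,r+1,0,[\mu])-\mu\,\tau(s,r+1,[\lambda^{-1}],[\mu])\tau(s+1,r)$; (3b) $\lambda^{-1}\tau(s-1,r+1,0,[\mu])\tau(s+1,r+1,[\lambda^{-1}],0)-\lambda^{-1}\tau(s,r+2,[\lambda^{-1}],[\mu])\tau(s,r)=\mu^{-1}\tau(s,r+1,[\lambda^{-1}],0)\tau(s,r+1,0,[\mu])-\mu^{-1}\tau(s,r+1,[\lambda^{-1}],[\mu])\tau(s,r+1)$. *)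

From HB Require Import structures.
From mathcomp Require Import all_boot all_order all_algebra.
Set Implicit Arguments. Unset Strict Implicit. Unset Printing Implicit Defensive.
Import Order.TTheory GRing.Theory Num.Theory.
Local Open Scope ring_scope.

Section Defs.
Variable K : fieldType.

(* A time vector t = (t_1, t_2, ...) is a function nat -> K, with t k = t_{k+1}. *)
Definition times := nat -> K.

Definition tzero : times := fun _ => 0.
Definition tadd (t a : times) : times := fun k => t k + a k.
Definition tsub (t a : times) : times := fun k => t k - a k.

(* [z] = (z, z^2/2, z^3/3, ...) *)
Definition brk (z : K) : times := fun k => z ^+ k.+1 / (k.+1)%:R.

Definition tauT := int -> int -> times -> times -> K.

Definition waveT := int -> int -> times -> times -> K -> K.

(* E t z plays the role of the formal exponential e^{xi(t,z)}:
   it is nowhere zero, additive-to-multiplicative in t, and satisfies the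
   formal identity e^{xi([c],z)} = exp(sum_k (cz)^k/k) = 1/(1 - c z). *)
Definition formal_exp_xi (E : times -> K -> K) : Prop :=
  [/\ forall t z, E t z != 0,
      forall t a z, E (tadd t a) z = E t z * E a z
    & forall c z, c * z != 1 -> E (brk c) z = (1 - c * z)^-1].

Definition nowhere_zero (tau : tauT) : Prop :=
  forall s r t tb, tau s r t tb != 0.

Definition Psi1 (E : times -> K -> K) (tau : tauT) : waveT :=
  fun s r t tb z => z ^ (s + r) * E t z * tau s r (tsub t (brk z^-1)) tb / tau s r t tb.
Definition Psi2 (E : times -> K -> K) (tau : tauT) : waveT :=
  fun s r t tb z => z ^ (s + r - 2) * E t z
                    * tau (s - 1) (r - 1) (tsub t (brk z^-1)) tb / tau s r t tb.
Definition Psi1s (E : times -> K -> K) (tau : tauT) : waveT :=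
  fun s r t tb z => z ^ (- s - r - 2) * (E t z)^-1
                    * tau (s + 1) (r + 1) (tadd t (brk z^-1)) tb / tau s r t tb.
Definition Psi2s (E : times -> K -> K) (tau : tauT) : waveT :=
  fun s r t tb z => z ^ (- s - r) * (E t z)^-1
                    * tau s r (tadd t (brk z^-1)) tb / tau s r t tb.
Definition Psib1 (E : times -> K -> K) (tau : tauT) : waveT :=
  fun s r t tb z => z ^ (s - r) * E tb z^-1
                    * tau (s + 1) r t (tsub tb (brk z)) / tau s r t tb.
Definition Psib2 (E : times -> K -> K) (tau : tauT) : waveT :=
  fun s r t tb z => z ^ (s - r) * E tb z^-1
                    * tau s (r - 1) t (tsub tb (brk z)) / tau s r t tb.
Definition Psib1s (E : times -> K -> K) (tau : tauT) : waveT :=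
  fun s r t tb z => z ^ (- s + r) * (E tb z^-1)^-1
                    * tau s (r + 1) t (tadd tb (brk z)) / tau s r t tb.
Definition Psib2s (E : times -> K -> K) (tau : tauT) : waveT :=
  fun s r t tb z => z ^ (- s + r) * (E tb z^-1)^-1
                    * tau (s - 1) r t (tadd tb (brk z)) / tau s r t tb.

Definition fay_identities (tau : tauT) : Prop :=
  forall (s r : int) (t tb : times) (lam mu : K),
    lam != 0 -> mu != 0 -> lam != mu ->
  let T s' r' a ab := tau s' r' (tadd t a) (tadd tb ab) in
  let L := brk lam^-1 in let M := brk mu^-1 in
  let l := brk lam in let m := brk mu in
  let o := tzero in
  (
  - (mu / (lam - mu)) * T (s + 1) r M o * T (s + 1) (r + 1) L o
  - (lam / (mu - lam)) * T (s + 1) r L o * T (s + 1) (r + 1) M o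
  + (lam * mu)^-1 * T (s + 2) (r + 1) (tadd L M) o * tau s r t tb
  = T (s + 1) (r + 1) (tadd L M) o * tau (s + 1) r t tb) /\
  (
  - (mu / (lam - mu)) * T s (r + 1) M o * T (s + 1) (r + 1) L o
  - (lam / (mu - lam)) * T s (r + 1) L o * T (s + 1) (r + 1) M o
  + (lam * mu)^-1 * T (s + 1) (r + 2) (tadd L M) o * tau s r t tb
  = T (s + 1) (r + 1) (tadd L M) o * tau s (r + 1) t tb) /\
  (
  T s (r + 1) o (tadd l m) * tau s r t tb
  = lam / (lam - mu) * T s r o m * T s (r + 1) o l
  + mu / (mu - lam) * T s r o l * T s (r + 1) o m
  + lam * mu * T (s - 1) (r + 1) o (tadd l m) * tau (s + 1) r t tb) /\
  (
  T s (r + 1) o (tadd l m) * tau (s + 1) (r + 1) t tb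
  = lam / (lam - mu) * T (s + 1) (r + 1) o m * T s (r + 1) o l
  + mu / (mu - lam) * T (s + 1) (r + 1) o l * T s (r + 1) o m
  + lam * mu * T s (r + 2) o (tadd l m) * tau (s + 1) r t tb) /\
  (
  lam^-1 * T s r o m * T (s + 1) (r + 1) L o
  - lam^-1 * T (s + 1) (r + 1) L m * tau s r t tb
  = mu * T (s + 1) r L o * T s (r + 1) o m
  - mu * T s (r + 1) L m * tau (s + 1) r t tb) /\
  (
  lam^-1 * T (s - 1) (r + 1) o m * T (s + 1) (r + 1) L o
  - lam^-1 * T s (r + 2) L m * tau s r t tb
  = mu^-1 * T s (r + 1) L o * T s (r + 1) o m
  - mu^-1 * T s (r + 1) L m * tau s (r + 1) t tb).

Definition wave_equations (tau : tauT) (Phi1 Phi2 : waveT) : Prop :=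
  forall (s r : int) (t tb : times) (lam mu : K),
    lam != 0 -> mu != 0 -> lam != mu ->
  let tL := tsub t (brk lam^-1) in
  let tLp := tadd t (brk lam^-1) in
  let bl := tsub tb (brk lam) in
  let blp := tadd tb (brk lam) in
  [/\
  Phi1 s r tL tb mu + lam^-1 * Phi1 (s + 1) r t tb mu
  - (tau (s + 1) r tL tb * tau s r t tb) / (tau (s + 1) r t tb * tau s r tL tb)
      * Phi1 s r t tb mu
  - lam^-1 * ((tau (s + 1) r tL tb * tau (s + 1) (r + 1) t tb)
               / (tau (s + 1) r t tb * tau s r tL tb))
      * Phi2 (s + 1) r tL tb mu = 0,
  Phi2 s r tLp tb mu + lam^-1 * Phi2 (s - 1) r t tb mu
  - (tau (s - 1) r tLp tb * tau s r t tb) / (tau (s - 1) r t tb * tau s r tLp tb)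
      * Phi2 s r t tb mu
  - lam^-1 * ((tau (s - 1) r tLp tb * tau (s - 1) (r - 1) t tb)
               / (tau (s - 1) r t tb * tau s r tLp tb))
      * Phi1 (s - 1) r tLp tb mu = 0,
  Phi1 s r t bl mu - Phi1 s r t tb mu
  + lam * ((tau (s + 1) r t bl * tau (s - 1) r t tb)
            / (tau s r t tb * tau s r t bl))
      * Phi1 (s - 1) r t tb mu
  - lam * ((tau (s + 1) r t bl * tau s (r + 1) t tb)
            / (tau s r t tb * tau s r t bl))
      * Phi2 (s + 1) r t bl mu = 0
  & Phi2 s r t blp mu - Phi2 s r t tb mu
  + lam * ((tau (s - 1) r t blp * tau (s + 1) r t tb)
            / (tau s r t tb * tau s r t blp))
      * Phi2 (s + 1) r t tb mu
  - lam * ((tau (s - 1) r t blp * tau s (r - 1) t tb)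
            / (tau s r t tb * tau s r t blp))
      * Phi1 (s - 1) r t blp mu = 0 ].

End Defs.

(* Each of the sixteen linear equations (four equations for each of the
   four pairs of wave functions) is, after substituting the definition of
   the wave functions through tau, using e^{xi(t + a, z)} =
   e^{xi(t, z)} e^{xi(a, z)} and e^{xi([c], z)} = 1/(1 - c z), and
   multiplying by a nonzero factor, exactly one of the six Fay identities
   (1a)-(3b) evaluated at shifted arguments (s, r, t, tbar, and possibly
   with lambda and mu exchanged).  The direct one uses all sixteen
     correspondences; for the converse the pair (Psi1s, Psi2s) recovers
     (1a), (1b) and the pair (Psib1s, Psib2s) recovers (2a)-(3b), after
     undoing the shifts of the arguments. *)

From HB Require Import structures.
From mathcomp Require Import all_boot all_order all_algebra.
From mathcomp Require Import ring.
From Stdlib Require Import FunctionalExtensionality.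
Import Order.TTheory GRing.Theory Num.Theory.
Set Implicit Arguments. Unset Strict Implicit. Unset Printing Implicit Defensive.
Local Open Scope ring_scope.

Section TimeShifts.
Variable K : fieldType.
Implicit Types x y a b : times K.

Lemma times_ext x y : (forall k, x k = y k) -> x = y.
Proof. exact: functional_extensionality. Qed.

Lemma tadd0 x : tadd x (tzero K) = x.
Proof. by apply: times_ext => k; rewrite /tadd /tzero addr0. Qed.
Lemma tsubK x a : tadd (tsub x a) a = x.
Proof. by apply: times_ext => k; rewrite /tadd /tsub subrK. Qed.
Lemma taddK x a : tsub (tadd x a) a = x.
Proof. by apply: times_ext => k; rewrite /tadd /tsub addrK. Qed.
Lemma taddA x a b : tadd x (tadd a b) = tadd (tadd x a) b.
Proof. by apply: times_ext => k; rewrite /tadd addrA. Qed.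
Lemma tsub_addC x a b : tsub (tadd x a) b = tadd (tsub x b) a.
Proof. by apply: times_ext => k; rewrite /tadd /tsub addrAC. Qed.
Lemma tsubKC x a b : tadd (tsub (tsub x a) b) a = tsub x b.
Proof. by apply: times_ext => k; rewrite /tadd /tsub; ring. Qed.
Lemma tsub_add2l x a b : tadd (tsub x b) (tadd a b) = tadd x a.
Proof. by apply: times_ext => k; rewrite /tadd /tsub; ring. Qed.
Lemma tsub_add2r x a b : tadd (tsub x a) (tadd a b) = tadd x b.
Proof. by apply: times_ext => k; rewrite /tadd /tsub; ring. Qed.
End TimeShifts.

Lemma idx_subDl (x : int) : x - 1 + 2 = x + 1. Proof. ring. Qed.
Lemma idx_sub2D1 (x : int) : x - 2 + 1 = x - 1. Proof. ring. Qed.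
Lemma idx_sub11 (x : int) : x - 1 - 1 = x - 2. Proof. ring. Qed.
Lemma idx_add11 (x : int) : x + 1 + 1 = x + 2. Proof. ring. Qed.
Lemma idx_add1sub2 (x : int) : x + 1 - 2 = x - 1. Proof. ring. Qed.
Lemma idx_add12 (x : int) : x + 1 + 2 = x + 3. Proof. ring. Qed.

(* Small integer powers, so that [field] sees monomials. *)
Lemma expz1 (K : fieldType) (x : K) : x ^ (1 : int) = x. Proof. by []. Qed.
Lemma expz2 (K : fieldType) (x : K) : x ^ (2 : int) = x * x.
Proof. exact: expr2. Qed.
Lemma expz3 (K : fieldType) (x : K) : x ^ (3 : int) = x * x * x.
Proof. by rewrite /exprz /= exprSr expr2. Qed.

(* For lam != mu the factors e^{xi([lam^-1], mu)} and e^{xi([mu], lam^-1)}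
   are defined: their denominators 1 - lam^-1 mu, 1 - lam mu^-1 are nonzero. *)
Lemma invl_mul_neq1 (K : fieldType) (lam mu : K) :
  lam != 0 -> lam != mu -> lam^-1 * mu != 1.
Proof.
move=> hl hlm; apply: contra hlm => /eqP h.
by rewrite -[lam]mulr1 -h mulrA mulfV // mul1r.
Qed.
Lemma mul_invr_neq1 (K : fieldType) (lam mu : K) :
  mu != 0 -> lam != mu -> lam * mu^-1 != 1.
Proof.
move=> hm hlm; apply: contra hlm => /eqP h.
by rewrite -[mu]mul1r -h -mulrA mulVf // mulr1.
Qed.

Lemma eq0_scale (K : fieldType) (X A B c : K) :
  c != 0 -> X = c * (A - B) -> (X = 0 <-> A = B).
Proof.
move=> hc ->; split; last by move=> ->; rewrite subrr mulr0.
by move/eqP; rewrite mulf_eq0 (negbTE hc) subr_eq0 => /eqP.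
Qed.

Section WaveFay.
Variable K : fieldType.
Variable E : times K -> K -> K.
Hypothesis HE : formal_exp_xi E.
Variable tau : tauT K.
Hypothesis Htau : nowhere_zero tau.

Lemma E_neq0 t z : E t z != 0. Proof. by case: HE. Qed.
Lemma E_add t a z : E (tadd t a) z = E t z * E a z. Proof. by case: HE. Qed.
Lemma E_sub t a z : E (tsub t a) z = E t z / E a z.
Proof. by rewrite -{2}(tsubK t a) E_add mulfK ?E_neq0. Qed.
Lemma E_brk c z : c * z != 1 -> E (brk c) z = (1 - c * z)^-1.
Proof. by case: HE => _ _; apply. Qed.

Definition fay1a (s r : int) (t tb : times K) (lam mu : K) : Prop :=
  let T s' r' a ab := tau s' r' (tadd t a) (tadd tb ab) in
  let L := brk lam^-1 in let M := brk mu^-1 in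
  let o := tzero K in
  - (mu / (lam - mu)) * T (s + 1) r M o * T (s + 1) (r + 1) L o
  - (lam / (mu - lam)) * T (s + 1) r L o * T (s + 1) (r + 1) M o
  + (lam * mu)^-1 * T (s + 2) (r + 1) (tadd L M) o * tau s r t tb
  = T (s + 1) (r + 1) (tadd L M) o * tau (s + 1) r t tb.
Definition fay1b (s r : int) (t tb : times K) (lam mu : K) : Prop :=
  let T s' r' a ab := tau s' r' (tadd t a) (tadd tb ab) in
  let L := brk lam^-1 in let M := brk mu^-1 in
  let o := tzero K in
  - (mu / (lam - mu)) * T s (r + 1) M o * T (s + 1) (r + 1) L o
  - (lam / (mu - lam)) * T s (r + 1) L o * T (s + 1) (r + 1) M o
  + (lam * mu)^-1 * T (s + 1) (r + 2) (tadd L M) o * tau s r t tb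
  = T (s + 1) (r + 1) (tadd L M) o * tau s (r + 1) t tb.
Definition fay2a (s r : int) (t tb : times K) (lam mu : K) : Prop :=
  let T s' r' a ab := tau s' r' (tadd t a) (tadd tb ab) in
  let l := brk lam in let m := brk mu in
  let o := tzero K in
  T s (r + 1) o (tadd l m) * tau s r t tb
  = lam / (lam - mu) * T s r o m * T s (r + 1) o l
  + mu / (mu - lam) * T s r o l * T s (r + 1) o m
  + lam * mu * T (s - 1) (r + 1) o (tadd l m) * tau (s + 1) r t tb.
Definition fay2b (s r : int) (t tb : times K) (lam mu : K) : Prop :=
  let T s' r' a ab := tau s' r' (tadd t a) (tadd tb ab) in
  let l := brk lam in let m := brk mu in
  let o := tzero K in
  T s (r + 1) o (tadd l m) * tau (s + 1) (r + 1) t tb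
  = lam / (lam - mu) * T (s + 1) (r + 1) o m * T s (r + 1) o l
  + mu / (mu - lam) * T (s + 1) (r + 1) o l * T s (r + 1) o m
  + lam * mu * T s (r + 2) o (tadd l m) * tau (s + 1) r t tb.
Definition fay3a (s r : int) (t tb : times K) (lam mu : K) : Prop :=
  let T s' r' a ab := tau s' r' (tadd t a) (tadd tb ab) in
  let L := brk lam^-1 in let m := brk mu in
  let o := tzero K in
  lam^-1 * T s r o m * T (s + 1) (r + 1) L o
  - lam^-1 * T (s + 1) (r + 1) L m * tau s r t tb
  = mu * T (s + 1) r L o * T s (r + 1) o m
  - mu * T s (r + 1) L m * tau (s + 1) r t tb.
Definition fay3b (s r : int) (t tb : times K) (lam mu : K) : Prop :=
  let T s' r' a ab := tau s' r' (tadd t a) (tadd tb ab) in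
  let L := brk lam^-1 in let m := brk mu in
  let o := tzero K in
  lam^-1 * T (s - 1) (r + 1) o m * T (s + 1) (r + 1) L o
  - lam^-1 * T s (r + 2) L m * tau s r t tb
  = mu^-1 * T s (r + 1) L o * T s (r + 1) o m
  - mu^-1 * T s (r + 1) L m * tau s (r + 1) t tb.

Lemma fay_identitiesE : fay_identities tau <->
  forall s r t tb lam mu, lam != 0 -> mu != 0 -> lam != mu ->
  fay1a s r t tb lam mu /\ fay1b s r t tb lam mu /\ fay2a s r t tb lam mu /\
  fay2b s r t tb lam mu /\ fay3a s r t tb lam mu /\ fay3b s r t tb lam mu.
Proof. by []. Qed.

Definition wave1 (Phi1 Phi2 : waveT K) (s r : int) (t tb : times K) (lam mu : K) : K :=
  let tL := tsub t (brk lam^-1) in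
  Phi1 s r tL tb mu + lam^-1 * Phi1 (s + 1) r t tb mu
  - (tau (s + 1) r tL tb * tau s r t tb) / (tau (s + 1) r t tb * tau s r tL tb)
      * Phi1 s r t tb mu
  - lam^-1 * ((tau (s + 1) r tL tb * tau (s + 1) (r + 1) t tb)
               / (tau (s + 1) r t tb * tau s r tL tb))
      * Phi2 (s + 1) r tL tb mu.
Definition wave2 (Phi1 Phi2 : waveT K) (s r : int) (t tb : times K) (lam mu : K) : K :=
  let tLp := tadd t (brk lam^-1) in
  Phi2 s r tLp tb mu + lam^-1 * Phi2 (s - 1) r t tb mu
  - (tau (s - 1) r tLp tb * tau s r t tb) / (tau (s - 1) r t tb * tau s r tLp tb)
      * Phi2 s r t tb mu
  - lam^-1 * ((tau (s - 1) r tLp tb * tau (s - 1) (r - 1) t tb)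
               / (tau (s - 1) r t tb * tau s r tLp tb))
      * Phi1 (s - 1) r tLp tb mu.
Definition wave3 (Phi1 Phi2 : waveT K) (s r : int) (t tb : times K) (lam mu : K) : K :=
  let bl := tsub tb (brk lam) in
  Phi1 s r t bl mu - Phi1 s r t tb mu
  + lam * ((tau (s + 1) r t bl * tau (s - 1) r t tb)
            / (tau s r t tb * tau s r t bl))
      * Phi1 (s - 1) r t tb mu
  - lam * ((tau (s + 1) r t bl * tau s (r + 1) t tb)
            / (tau s r t tb * tau s r t bl))
      * Phi2 (s + 1) r t bl mu.
Definition wave4 (Phi1 Phi2 : waveT K) (s r : int) (t tb : times K) (lam mu : K) : K :=
  let blp := tadd tb (brk lam) in
  Phi2 s r t blp mu - Phi2 s r t tb mu
  + lam * ((tau (s - 1) r t blp * tau (s + 1) r t tb)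
            / (tau s r t tb * tau s r t blp))
      * Phi2 (s + 1) r t tb mu
  - lam * ((tau (s - 1) r t blp * tau s (r - 1) t tb)
            / (tau s r t tb * tau s r t blp))
      * Phi1 (s - 1) r t blp mu.

Lemma wave_equationsE Phi1 Phi2 : wave_equations tau Phi1 Phi2 <->
  forall s r t tb lam mu, lam != 0 -> mu != 0 -> lam != mu ->
  [/\ wave1 Phi1 Phi2 s r t tb lam mu = 0, wave2 Phi1 Phi2 s r t tb lam mu = 0,
      wave3 Phi1 Phi2 s r t tb lam mu = 0 & wave4 Phi1 Phi2 s r t tb lam mu = 0].
Proof. by []. Qed.

Ltac neq0 := repeat (apply/andP; split);
  repeat (apply: mulf_neq0 || apply: invr_neq0 || rewrite oppr_eq0);
  try solve [exact: Htau | exact: E_neq0 | exact: expfz_neq0 | done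
    | rewrite subr_eq0 // eq_sym // | exact: oner_neq0
    | rewrite subr_eq0 eq_sym; exact: invl_mul_neq1
    | rewrite subr_eq0 eq_sym; exact: mul_invr_neq1].

(* [correspondence c] proves "wave equation = 0 <-> Fay identity" given the
   scaling factor c: unfold both sides, bring shifted times and indices to
   normal form, evaluate E on shifts and on brackets [c], split integer
   powers of mu into monomials, and conclude by [field]. *)
Ltac correspondence c :=
  let hl := fresh "hl" in let hm := fresh "hm" in let hlm := fresh "hlm" in
  move=> hl hm hlm; rewrite /fay1a /fay1b /fay2a /fay2b /fay3a /fay3b /=;
  apply: (@eq0_scale _ _ _ _ c); [neq0 | ];
  rewrite /wave1 /wave2 /wave3 /wave4 /Psi1 /Psi2 /Psi1s /Psi2s;
  rewrite /Psib1 /Psib2 /Psib1s /Psib2s /=;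
  rewrite ?tadd0 ?tsub_addC ?tsub_add2l ?tsub_add2r ?tsubKC ?tsubK ?taddA;
  rewrite ?addrK ?idx_subDl ?idx_sub2D1 ?idx_sub11 ?idx_add11 ?idx_add1sub2;
  rewrite ?idx_add12 ?E_sub ?E_add;
  rewrite ?(E_brk (invl_mul_neq1 hl hlm)) ?(E_brk (mul_invr_neq1 hm hlm));
  rewrite ?opprD !(expfzDr _ _ hm) -?invr_expz ?expz1 ?expz2 ?expz3;
  field; neq0.

Lemma wave1_Psi s r t tb lam mu : lam != 0 -> mu != 0 -> lam != mu ->
  wave1 (Psi1 E tau) (Psi2 E tau) s r t tb lam mu = 0 <->
  fay1b s (r - 1) (tsub (tsub t (brk lam^-1)) (brk mu^-1)) tb lam mu.
Proof. correspondence (- (1 - lam^-1 * mu) * (mu ^ (s + r) * E t mu)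
   / (tau (s + 1) r t tb * tau s r (tsub t (brk lam^-1)) tb)). Qed.
Lemma wave2_Psi s r t tb lam mu : lam != 0 -> mu != 0 -> lam != mu ->
  wave2 (Psi1 E tau) (Psi2 E tau) s r t tb lam mu = 0 <->
  fay1a (s - 2) (r - 1) (tsub t (brk mu^-1)) tb lam mu.
Proof. correspondence ((mu ^ (s + r - 2) * E t mu)
   / (tau (s - 1) r t tb * tau s r (tadd t (brk lam^-1)) tb)). Qed.
Lemma wave3_Psi s r t tb lam mu : lam != 0 -> mu != 0 -> lam != mu ->
  wave3 (Psi1 E tau) (Psi2 E tau) s r t tb lam mu = 0 <->
  fay3b s (r - 1) (tsub t (brk mu^-1)) (tsub tb (brk lam)) mu lam.
Proof. correspondence (lam * (mu ^ (s + r) * E t mu)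
   / (tau s r t tb * tau s r t (tsub tb (brk lam)))). Qed.
Lemma wave4_Psi s r t tb lam mu : lam != 0 -> mu != 0 -> lam != mu ->
  wave4 (Psi1 E tau) (Psi2 E tau) s r t tb lam mu = 0 <->
  fay3a (s - 1) (r - 1) (tsub t (brk mu^-1)) tb mu lam.
Proof. correspondence (mu * (mu ^ (s + r - 2) * E t mu)
   / (tau s r t tb * tau s r t (tadd tb (brk lam)))). Qed.

Lemma wave1_Psis s r t tb lam mu : lam != 0 -> mu != 0 -> lam != mu ->
  wave1 (Psi1s E tau) (Psi2s E tau) s r t tb lam mu = 0 <->
  fay1a s r (tsub t (brk lam^-1)) tb lam mu.
Proof. correspondence ((mu ^ (- s - r - 2) * (E t mu)^-1)
   / (tau (s + 1) r t tb * tau s r (tsub t (brk lam^-1)) tb)). Qed.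
Lemma wave2_Psis s r t tb lam mu : lam != 0 -> mu != 0 -> lam != mu ->
  wave2 (Psi1s E tau) (Psi2s E tau) s r t tb lam mu = 0 <->
  fay1b (s - 1) (r - 1) t tb lam mu.
Proof. correspondence (- (1 - lam^-1 * mu) * (mu ^ (- s - r) * (E t mu)^-1)
   / (tau (s - 1) r t tb * tau s r (tadd t (brk lam^-1)) tb)). Qed.
Lemma wave3_Psis s r t tb lam mu : lam != 0 -> mu != 0 -> lam != mu ->
  wave3 (Psi1s E tau) (Psi2s E tau) s r t tb lam mu = 0 <->
  fay3a s r t (tsub tb (brk lam)) mu lam.
Proof. correspondence (mu * (mu ^ (- s - r - 2) * (E t mu)^-1)
   / (tau s r t tb * tau s r t (tsub tb (brk lam)))). Qed.
Lemma wave4_Psis s r t tb lam mu : lam != 0 -> mu != 0 -> lam != mu ->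
  wave4 (Psi1s E tau) (Psi2s E tau) s r t tb lam mu = 0 <->
  fay3b s (r - 1) t tb mu lam.
Proof. correspondence (lam * (mu ^ (- s - r) * (E t mu)^-1)
   / (tau s r t tb * tau s r t (tadd tb (brk lam)))). Qed.

Lemma wave1_Psib s r t tb lam mu : lam != 0 -> mu != 0 -> lam != mu ->
  wave1 (Psib1 E tau) (Psib2 E tau) s r t tb lam mu = 0 <->
  fay3b (s + 1) (r - 1) (tsub t (brk lam^-1)) (tsub tb (brk mu)) lam mu.
Proof. correspondence (mu * (mu ^ (s - r) * E tb mu^-1)
   / (tau (s + 1) r t tb * tau s r (tsub t (brk lam^-1)) tb)). Qed.
Lemma wave2_Psib s r t tb lam mu : lam != 0 -> mu != 0 -> lam != mu ->
  wave2 (Psib1 E tau) (Psib2 E tau) s r t tb lam mu = 0 <->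
  fay3a (s - 1) (r - 1) t (tsub tb (brk mu)) lam mu.
Proof. correspondence (- mu^-1 * (mu ^ (s - r) * E tb mu^-1)
   / (tau (s - 1) r t tb * tau s r (tadd t (brk lam^-1)) tb)). Qed.
Lemma wave3_Psib s r t tb lam mu : lam != 0 -> mu != 0 -> lam != mu ->
  wave3 (Psib1 E tau) (Psib2 E tau) s r t tb lam mu = 0 <->
  fay2b s (r - 1) t (tsub (tsub tb (brk lam)) (brk mu)) lam mu.
Proof. correspondence ((1 - lam * mu^-1) * (mu ^ (s - r) * E tb mu^-1)
   / (tau s r t tb * tau s r t (tsub tb (brk lam)))). Qed.
Lemma wave4_Psib s r t tb lam mu : lam != 0 -> mu != 0 -> lam != mu ->
  wave4 (Psib1 E tau) (Psib2 E tau) s r t tb lam mu = 0 <->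
  fay2a s (r - 1) t (tsub tb (brk mu)) lam mu.
Proof. correspondence (- (mu ^ (s - r) * E tb mu^-1)
   / (tau s r t tb * tau s r t (tadd tb (brk lam)))). Qed.

Lemma wave1_Psibs s r t tb lam mu : lam != 0 -> mu != 0 -> lam != mu ->
  wave1 (Psib1s E tau) (Psib2s E tau) s r t tb lam mu = 0 <->
  fay3a s r (tsub t (brk lam^-1)) tb lam mu.
Proof. correspondence (- mu^-1 * (mu ^ (- s + r) * (E tb mu^-1)^-1)
   / (tau (s + 1) r t tb * tau s r (tsub t (brk lam^-1)) tb)). Qed.
Lemma wave2_Psibs s r t tb lam mu : lam != 0 -> mu != 0 -> lam != mu ->
  wave2 (Psib1s E tau) (Psib2s E tau) s r t tb lam mu = 0 <->
  fay3b (s - 1) (r - 1) t tb lam mu.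
Proof. correspondence (mu * (mu ^ (- s + r) * (E tb mu^-1)^-1)
   / (tau (s - 1) r t tb * tau s r (tadd t (brk lam^-1)) tb)). Qed.
Lemma wave3_Psibs s r t tb lam mu : lam != 0 -> mu != 0 -> lam != mu ->
  wave3 (Psib1s E tau) (Psib2s E tau) s r t tb lam mu = 0 <->
  fay2a s r t (tsub tb (brk lam)) lam mu.
Proof. correspondence (- (mu ^ (- s + r) * (E tb mu^-1)^-1)
   / (tau s r t tb * tau s r t (tsub tb (brk lam)))). Qed.
Lemma wave4_Psibs s r t tb lam mu : lam != 0 -> mu != 0 -> lam != mu ->
  wave4 (Psib1s E tau) (Psib2s E tau) s r t tb lam mu = 0 <->
  fay2b (s - 1) (r - 1) t tb lam mu.
Proof. correspondence ((1 - lam * mu^-1) * (mu ^ (- s + r) * (E tb mu^-1)^-1)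
   / (tau s r t tb * tau s r t (tadd tb (brk lam)))). Qed.

Section FayIdentities.
Hypothesis Hfay : fay_identities tau.
Variables (s r : int) (t tb : times K) (lam mu : K).
Hypotheses (hl : lam != 0) (hm : mu != 0) (hlm : lam != mu).

Lemma fay1a_of : fay1a s r t tb lam mu.
Proof. by case: (Hfay s r t tb hl hm hlm). Qed.
Lemma fay1b_of : fay1b s r t tb lam mu.
Proof. by case: (Hfay s r t tb hl hm hlm) => _ []. Qed.
Lemma fay2a_of : fay2a s r t tb lam mu.
Proof. by case: (Hfay s r t tb hl hm hlm) => _ [_ []]. Qed.
Lemma fay2b_of : fay2b s r t tb lam mu.
Proof. by case: (Hfay s r t tb hl hm hlm) => _ [_ [_ []]]. Qed.
Lemma fay3a_of : fay3a s r t tb lam mu.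
Proof. by case: (Hfay s r t tb hl hm hlm) => _ [_ [_ [_ []]]]. Qed.
Lemma fay3b_of : fay3b s r t tb lam mu.
Proof. by case: (Hfay s r t tb hl hm hlm) => _ [_ [_ [_ []]]]. Qed.
End FayIdentities.

Section FayToWave.
Hypothesis Hfay : fay_identities tau.

Lemma fay_wave_Psi : wave_equations tau (Psi1 E tau) (Psi2 E tau).
Proof.
apply/wave_equationsE => s r t tb lam mu hl hm hlm.
have hml : mu != lam by rewrite eq_sym.
split; [apply/wave1_Psi | apply/wave2_Psi | apply/wave3_Psi | apply/wave4_Psi] => //.
- exact: fay1b_of.
- exact: fay1a_of.
- exact: fay3b_of.
- exact: fay3a_of.
Qed.

Lemma fay_wave_Psis : wave_equations tau (Psi1s E tau) (Psi2s E tau).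
Proof.
apply/wave_equationsE => s r t tb lam mu hl hm hlm.
have hml : mu != lam by rewrite eq_sym.
split; [apply/wave1_Psis | apply/wave2_Psis | apply/wave3_Psis | apply/wave4_Psis] => //.
- exact: fay1a_of.
- exact: fay1b_of.
- exact: fay3a_of.
- exact: fay3b_of.
Qed.

Lemma fay_wave_Psib : wave_equations tau (Psib1 E tau) (Psib2 E tau).
Proof.
apply/wave_equationsE => s r t tb lam mu hl hm hlm.
split; [apply/wave1_Psib | apply/wave2_Psib | apply/wave3_Psib | apply/wave4_Psib] => //.
- exact: fay3b_of.
- exact: fay3a_of.
- exact: fay2b_of.
- exact: fay2a_of.
Qed.

Lemma fay_wave_Psibs : wave_equations tau (Psib1s E tau) (Psib2s E tau).
Proof.
apply/wave_equationsE => s r t tb lam mu hl hm hlm.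
split; [apply/wave1_Psibs | apply/wave2_Psibs | apply/wave3_Psibs | apply/wave4_Psibs] => //.
- exact: fay3a_of.
- exact: fay3b_of.
- exact: fay2a_of.
- exact: fay2b_of.
Qed.
End FayToWave.

(* Converse: the starred pairs alone give back all six Fay identities, by
   evaluating their wave equations at (t + [lam^-1], s, r), (s + 1, r + 1)
   or (tb + [lam], s, r) so that the shifts of the correspondences cancel. *)
Lemma wave_fay :
  wave_equations tau (Psi1s E tau) (Psi2s E tau) ->
  wave_equations tau (Psib1s E tau) (Psib2s E tau) -> fay_identities tau.
Proof.
move=> /wave_equationsE Hs /wave_equationsE Hbs.
apply/fay_identitiesE => s r t tb lam mu hl hm hlm.
split; [|split; [|split; [|split; [|split]]]].
- have [+ _ _ _] := Hs s r (tadd t (brk lam^-1)) tb lam mu hl hm hlm.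
  by move/wave1_Psis; rewrite taddK; apply.
- have [_ + _ _] := Hs (s + 1) (r + 1) t tb lam mu hl hm hlm.
  by move/wave2_Psis; rewrite !addrK; apply.
- have [_ _ + _] := Hbs s r t (tadd tb (brk lam)) lam mu hl hm hlm.
  by move/wave3_Psibs; rewrite taddK; apply.
- have [_ _ _ +] := Hbs (s + 1) (r + 1) t tb lam mu hl hm hlm.
  by move/wave4_Psibs; rewrite !addrK; apply.
- have [+ _ _ _] := Hbs s r (tadd t (brk lam^-1)) tb lam mu hl hm hlm.
  by move/wave1_Psibs; rewrite taddK; apply.
- have [_ + _ _] := Hbs (s + 1) (r + 1) t tb lam mu hl hm hlm.
  by move/wave2_Psibs; rewrite !addrK; apply.
Qed.
End WaveFay.

Theorem theorem5 (K : fieldType) (charK0 : [pchar K] =i pred0)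
  (E : times K -> K -> K) (HE : formal_exp_xi E)
  (tau : tauT K) (Htau : nowhere_zero tau) :
  fay_identities tau <->
  [/\ wave_equations tau (Psi1 E tau) (Psi2 E tau),
      wave_equations tau (Psi1s E tau) (Psi2s E tau),
      wave_equations tau (Psib1 E tau) (Psib2 E tau)
    & wave_equations tau (Psib1s E tau) (Psib2s E tau)].
Proof.
split=> [Hfay | [_ Hs _ Hbs]].
- by split; [exact: fay_wave_Psi | exact: fay_wave_Psis
    | exact: fay_wave_Psib | exact: fay_wave_Psibs].
- exact: wave_fay Hs Hbs.
Qed.
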